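(* Fix $\beta\in\mathbb{R}^p$ and treat the indicator $f$ as a known fixed function. Consider the functional \[ M_\ell(\beta)=\mathbb{E}\Big[g(X)\big\{\tau_\ell(X)f(X)+(b-a)f(X)+a-b-m(X;\beta)\big\}\Big],\qquad X=(V,W), \] viewed as a functional of the (nonparametric) distribution of the data. Its influence function is \begin{align*} \varphi(Z;\beta,\eta)=\;&\Big\{\frac{EA}{\pi_1(V)}\big(Y-\mu_1(V)\big)-\frac{E(1-A)}{\pi_0(V)}\big(Y-\mu_0(V)\big)\Big\}\sum_{w}g(V,w)f(V,w)\\ &+\frac{(b-a)(1-E)}{\rho_0(V)}\Big\{g(V,W)f(V,W)-\sum_{w}g(V,w)f(V,w)\nu(V,w)\Big\}\\ &-\frac{1-E}{\rho_0(V)}\Big\{g(V,W)f(V,W)\tau_\ell(V,W)-\sum_{w}g(V,w)f(V,w)\tau_\ell(V,w)\nu(V,w)\Big\}\\ &+g(X)\big\{\tau_\ell(X)f(X)+(b-a)f(X)+a-b-m(X;\beta)\big\}, \end{align*} where the sums run over the (finite) support of $W$. In particular, for the linear model $m(v,w;\beta)=\beta_1^\top v+\beta_2^\top w$ with $h\equiv 1$, one takes $g(v,w)=(v,w)^\top$.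
   Context: Setup: random variables $V$, $W$ (finitely many values), $E\in\{0,1\}$ ($E=1$ study, $E=0$ target), $A\in\{0,1\}$, potential outcomes $Y^1,Y^0\in[a,b]$, $Y=Y^A$, with $A\perp\!\!\!\perp(Y^0,Y^1)\mid V,E=1$, positivity, $\mathbb{P}(W=w\mid V,E=1)=\mathbb{P}(W=w\mid V,E=0)$ and equal conditional effects $\mathbb{E}(Y^1-Y^0\mid V,W,E)$ across $E$. Data $Z=(V,E,W,A,Y)$. Nuisances $\eta$: $\mu_{a'}(v)=\mathbb{E}(Y\mid V=v,A=a',E=1)$; $\nu(v,w)=\mathbb{P}(W=w\mid V=v,E=0)$; $\pi_{a'}(V)=\mathbb{P}(A=a',E=1\mid V)$ for $a'\in\{0,1\}$; $\rho_0(V)=\mathbb{P}(E=0\mid V)$; $\tau_\ell(v,w)=\frac{\mu_1(v)-\mu_0(v)-(b-a)(1-\nu(v,w))}{\nu(v,w)}$; $f(v,w)=\mathbf{1}(\tau_\ell(v,w)+b-a\ge 0)$. The lower bound $\gamma_\ell=\max\{\tau_\ell,a-b\}$ is approximated by a model $m(x;\beta)$, $\beta\in\mathbb{R}^p$ ($p$ fixed), with $\beta=\arg\min_\theta \mathbb{E}[h(X)\{\gamma_\ell(X)-m(X;\theta)\}^2]$ for an analyst-chosen weight $h$; $g(x)=h(x)\,\partial m(x;\beta)/\partial\beta$. The moment condition is $M_\ell(\beta)=0$. All nuisances are assumed bounded away from $0$. *)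

From HB Require Import structures.
From mathcomp Require Import all_boot all_order all_algebra.
From mathcomp Require Import all_classical all_reals all_analysis.
Set Implicit Arguments. Unset Strict Implicit. Unset Printing Implicit Defensive.
Import Order.TTheory GRing.Theory Num.Theory.
Import numFieldNormedType.Exports.
Local Open Scope classical_set_scope.
Local Open Scope ring_scope.

Record data (R : realType) (T : Type) (Vt Wt : finType) := Data {
  Vr : T -> Vt; Er : T -> bool; Wr : T -> Wt; Ar : T -> bool; Yr : T -> R }.

Definition Ex d (T : measurableType d) (R : realType) (P : probability T R)
  (h : T -> R) : R := \int[P]_(x in setT) h x.

(* Expectation operator of the mixture (1-t) P + t Q (linear in the measure). *)
Definition mixEx d (T : measurableType d) (R : realType) (P Q : probability T R)
  (t : R) (h : T -> R) : R := (1 - t) * Ex P h + t * Ex Q h.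

Section Nuisances.
Variables (R : realType) (T : Type) (Vt Wt : finType).
Variables (ex : (T -> R) -> R) (D : data R T Vt Wt) (a b : R).

Definition cellA (v : Vt) (a' : bool) (t : T) : R :=
  ((Vr D t == v) && (Ar D t == a') && Er D t)%:R.
Definition cellV (v : Vt) (t : T) : R := (Vr D t == v)%:R.
Definition cellV0 (v : Vt) (t : T) : R := ((Vr D t == v) && ~~ Er D t)%:R.
Definition cellV1 (v : Vt) (t : T) : R := ((Vr D t == v) && Er D t)%:R.
Definition cellVW1 (v : Vt) (w : Wt) (t : T) : R :=
  ((Vr D t == v) && (Wr D t == w) && Er D t)%:R.
Definition cellVW0 (v : Vt) (w : Wt) (t : T) : R :=
  ((Vr D t == v) && (Wr D t == w) && ~~ Er D t)%:R.

Definition mu (a' : bool) (v : Vt) : R :=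
  ex (fun t => Yr D t * cellA v a' t) / ex (cellA v a').
Definition nu (v : Vt) (w : Wt) : R := ex (cellVW0 v w) / ex (cellV0 v).
Definition pi (a' : bool) (v : Vt) : R := ex (cellA v a') / ex (cellV v).
Definition rho0 (v : Vt) : R := ex (cellV0 v) / ex (cellV v).
Definition tauL (v : Vt) (w : Wt) : R :=
  (mu true v - mu false v - (b - a) * (1 - nu v w)) / nu v w.
Definition findic (v : Vt) (w : Wt) : R :=
  if 0 <= tauL v w + (b - a) then 1 else 0.

Variables (g f m : Vt -> Wt -> R).

Definition Mfun : R :=
  ex (fun t => let v := Vr D t in let w := Wr D t in
     g v w * (tauL v w * f v w + (b - a) * f v w + a - b - m v w)).

Definition phi (t : T) : R :=
  let v := Vr D t in let w := Wr D t in
  let e := (Er D t)%:R in let A := (Ar D t)%:R in let y := Yr D t in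
  (e * A / pi true v * (y - mu true v)
     - e * (1 - A) / pi false v * (y - mu false v))
    * (\sum_(w' : Wt) g v w' * f v w')
  + (b - a) * (1 - e) / rho0 v
    * (g v w * f v w - \sum_(w' : Wt) g v w' * f v w' * nu v w')
  - (1 - e) / rho0 v
    * (g v w * f v w * tauL v w
       - \sum_(w' : Wt) g v w' * f v w' * tauL v w' * nu v w')
  + g v w * (tauL v w * f v w + (b - a) * f v w + a - b - m v w).

End Nuisances.

Definition gcomp (R : realType) (Vt Wt : finType) (p : nat)
  (h : Vt -> Wt -> R) (mm : 'rV[R]_p -> Vt -> Wt -> R) (beta : 'rV[R]_p)
  (i : 'I_p) (v : Vt) (w : Wt) : R :=
  h v w * 'D_(\row_(j < p) (j == i)%:R) (fun th => mm th v w) beta.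

From Pilot Require Import Defs.
From HB Require Import structures.
From mathcomp Require Import all_boot all_order all_algebra.
From mathcomp Require Import all_classical all_reals all_analysis.
From mathcomp Require Import ring lra measurable_realfun.
Import Order.TTheory GRing.Theory Num.Theory.
Import numFieldNormedType.Exports.
Set Implicit Arguments. Unset Strict Implicit. Unset Printing Implicit Defensive.
Local Open Scope classical_set_scope.
Local Open Scope ring_scope.

(* Along the mixture P_t = (1 - t) P + t Q every expectation is affine in t.
   Splitting along the finitely many cells {V = v, W = w}, M_l(P_t) is a finite
   sum of the cell masses P_t(V = v, W = w) times rational functions of finitely
   many such expectations (through mu, nu and tau_l), with f and g held fixed;
   the product and quotient rules give its derivative at t = 0.  Cell by cell,
   phi is a fixed linear combination of indicators (times Y), so
   E_Q phi - E_P phi is the same combination of the differences E_Q - E_P.  The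
   two expressions agree cell by cell once P(V = v, W = w) = nu(v, w) P(V = v),
   which is where the equality of the laws of W given V across E enters. *)

Section BoundedMeasurable.
Context d (T : measurableType d) (R : realType).

Definition bounded_measurable (h : T -> R) :=
  measurable_fun setT h /\ exists M : R, forall t, `|h t| <= M.

Lemma bounded_measurable_cst (c : R) : bounded_measurable (fun _ => c).
Proof. by split; [exact: measurable_cst | exists `|c|]. Qed.

Lemma bounded_measurable_add (h1 h2 : T -> R) :
  bounded_measurable h1 -> bounded_measurable h2 ->
  bounded_measurable (fun t => h1 t + h2 t).
Proof.
case=> m1 [M1 b1] [m2 [M2 b2]]; split; first exact: measurable_funD.
by exists (M1 + M2) => t; rewrite (le_trans (ler_normD _ _)) ?lerD.
Qed.

Lemma bounded_measurable_opp (h : T -> R) :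
  bounded_measurable h -> bounded_measurable (fun t => - h t).
Proof.
case=> m [M b]; split; first exact: measurableT_comp.
by exists M => t; rewrite normrN.
Qed.

Lemma bounded_measurable_mul (h1 h2 : T -> R) :
  bounded_measurable h1 -> bounded_measurable h2 ->
  bounded_measurable (fun t => h1 t * h2 t).
Proof.
case=> m1 [M1 b1] [m2 [M2 b2]]; split; first exact: measurable_funM.
by exists (M1 * M2) => t; rewrite normrM ler_pM.
Qed.

Lemma bounded_measurable_sum (I : Type) (r : seq I) (F : I -> T -> R) :
  (forall i, bounded_measurable (F i)) ->
  bounded_measurable (fun t => \sum_(i <- r) F i t).
Proof.
move=> bF; elim: r => [|i r IH].
  by under eq_fun do rewrite big_nil; exact: bounded_measurable_cst.
by under eq_fun do rewrite big_cons; exact: bounded_measurable_add.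
Qed.

Lemma bounded_measurable_natr (B : T -> bool) :
  measurable [set t | B t] -> bounded_measurable (fun t => (B t)%:R).
Proof.
move=> mB; split; last by exists 1 => t; case: (B t); rewrite ?normr1 ?normr0.
rewrite (_ : (fun t => _) = \1_[set t | B t]); first exact: measurable_indic.
by apply/funext => t; rewrite indicE; case: (boolP (B t)) => Bt;
  [rewrite mem_set | rewrite memNset //=; apply/negP].
Qed.

Variable P : probability T R.

Lemma bounded_measurable_integrable (h : T -> R) :
  bounded_measurable h -> P.-integrable setT (EFin \o h).
Proof.
case=> mh [M hM]; apply: measurable_bounded_integrable => //.
  by rewrite (le_lt_trans (probability_le1 P measurableT)) ?ltey.
rewrite /bounded_near; near=> M' => t _ /=.
apply: le_trans (hM t) _; near: M'; exact: nbhs_pinfty_ge (num_real M).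
Unshelve. all: end_near.
Qed.

Lemma ExD (h1 h2 : T -> R) : bounded_measurable h1 -> bounded_measurable h2 ->
  Ex P (fun t => h1 t + h2 t) = Ex P h1 + Ex P h2.
Proof. by move=> ? ?; rewrite /Ex RintegralD //; exact: bounded_measurable_integrable. Qed.

Lemma ExZ (c : R) (h : T -> R) : bounded_measurable h ->
  Ex P (fun t => c * h t) = c * Ex P h.
Proof. by move=> ?; rewrite /Ex RintegralZl //; exact: bounded_measurable_integrable. Qed.

Lemma ExN (h : T -> R) : bounded_measurable h -> Ex P (fun t => - h t) = - Ex P h.
Proof. by move=> ?; under eq_fun do rewrite -mulN1r; rewrite ExZ // mulN1r. Qed.

Lemma Ex_sum (I : finType) (F : I -> T -> R) :
  (forall i, bounded_measurable (F i)) ->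
  Ex P (fun t => \sum_(i : I) F i t) = \sum_(i : I) Ex P (F i).
Proof.
move=> bF; elim: (index_enum I) => [|i r IH].
  by under eq_fun do rewrite big_nil; rewrite big_nil /Ex Rintegral_cst // mul0r.
under eq_fun do rewrite big_cons.
by rewrite big_cons ExD ?IH //; exact: bounded_measurable_sum.
Qed.

End BoundedMeasurable.

#[local] Hint Resolve bounded_measurable_cst bounded_measurable_add
  bounded_measurable_opp bounded_measurable_mul : core.

Lemma natr_andb (S : pzSemiRingType) (b1 b2 : bool) :
  ((b1 && b2)%:R : S) = b1%:R * b2%:R.
Proof. by rewrite -mulnb natrM. Qed.

Lemma sum_natr_eq_mul (S : pzSemiRingType) (I : finType) (x : I) (F : I -> S) :
  \sum_(i : I) (x == i)%:R * F i = F x.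
Proof.
rewrite (bigD1 x) //= eqxx mul1r big1 ?addr0 // => i /negbTE.
by rewrite eq_sym => ->; rewrite mul0r.
Qed.

Section MeasurableBoolSets.
Context d (T : measurableType d).

Lemma measurable_andb (B1 B2 : T -> bool) :
  measurable [set t | B1 t] -> measurable [set t | B2 t] ->
  measurable [set t | B1 t && B2 t].
Proof.
move=> m1 m2; rewrite (_ : [set t | _] = [set t | B1 t] `&` [set t | B2 t]).
  exact: measurableI.
by apply/seteqP; split => t /=; [move/andP | move=> [-> ->]].
Qed.

Lemma measurable_eqb (U : eqType) (X : T -> U) (x : U) :
  measurable (X @^-1` [set x]) -> measurable [set t | X t == x].
Proof.
move=> mX; rewrite (_ : [set t | _] = X @^-1` [set x]) //.
by apply/seteqP; split => t /=; [move/eqP | move=> ->].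
Qed.

Lemma measurable_setb (X : T -> bool) :
  measurable (X @^-1` [set true]) -> measurable [set t | X t].
Proof. by rewrite (_ : [set t | X t] = X @^-1` [set true]). Qed.

Lemma measurable_setNb (X : T -> bool) :
  measurable (X @^-1` [set false]) -> measurable [set t | ~~ X t].
Proof.
move=> mX; rewrite (_ : [set t | _] = X @^-1` [set false]) //.
by apply/seteqP; split => t /=; [move/negbTE | move=> ->].
Qed.

End MeasurableBoolSets.

Section CellExpansion.
Context (R : realType) (T : Type) (Vt Wt : finType) (D : data R T Vt Wt).

Definition cellVW (v : Vt) (w : Wt) (t : T) : R :=
  ((Vr D t == v) && (Wr D t == w))%:R.

Lemma cellVW_expand (G : Vt -> Wt -> R) t :
  G (Vr D t) (Wr D t) = \sum_(v : Vt) \sum_(w : Wt) G v w * cellVW v w t.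
Proof.
rewrite -(sum_natr_eq_mul (Vr D t) (G ^~ (Wr D t))); apply: eq_bigr => v _.
rewrite -(sum_natr_eq_mul (Wr D t) (G v)) mulr_sumr; apply: eq_bigr => w _.
by rewrite /cellVW natr_andb; ring.
Qed.

Lemma cellVW_split v w t : cellVW v w t = cellVW1 D v w t + cellVW0 D v w t.
Proof.
by rewrite /cellVW /cellVW1 /cellVW0; case: (Er D t); rewrite ?andbT ?andbF ?addr0 ?add0r.
Qed.

Lemma cellV_split v t : cellV D v t = cellV1 D v t + cellV0 D v t.
Proof.
by rewrite /cellV /cellV1 /cellV0; case: (Er D t); rewrite ?andbT ?andbF ?addr0 ?add0r.
Qed.

Lemma cellV1_split v t : cellV1 D v t = cellA D v true t + cellA D v false t.
Proof.
rewrite /cellV1 /cellA; case: (Er D t); case: (Ar D t);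
  by rewrite ?andbT ?andbF /= ?addr0 ?add0r.
Qed.

Variables (ex : (T -> R) -> R) (a b : R) (g f m : Vt -> Wt -> R).

Definition Mintegrand v w :=
  g v w * (tauL ex D a b v w * f v w + (b - a) * f v w + a - b - m v w).

Definition target_coef v w :=
  (b - a) * (g v w * f v w) - g v w * f v w * tauL ex D a b v w.

(* The part of phi carried by the cell {V = v, W = w}, written as a linear form
   in the functional [e]: evaluation at [t] gives phi(t), an expectation gives
   the mean of phi. *)
Definition phi_cell (e : (T -> R) -> R) v w :=
  g v w * f v w / Defs.pi ex D true v
    * (e (fun t => Yr D t * cellA D v true t) - mu ex D true v * e (cellA D v true))
  - g v w * f v w / Defs.pi ex D false v
    * (e (fun t => Yr D t * cellA D v false t) - mu ex D false v * e (cellA D v false))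
  + target_coef v w / rho0 ex D v * (e (cellVW0 D v w) - nu ex D v w * e (cellV0 D v))
  + Mintegrand v w * e (cellVW v w).

Lemma phi_cellB (e1 e2 : (T -> R) -> R) v w :
  phi_cell e1 v w - phi_cell e2 v w = phi_cell (fun h => e1 h - e2 h) v w.
Proof. by rewrite /phi_cell; ring. Qed.

Lemma Mfun_cellVW :
  Mfun ex D a b g f m = ex (fun t => \sum_v \sum_w Mintegrand v w * cellVW v w t).
Proof. by congr ex; apply/funext => t; rewrite -cellVW_expand. Qed.

Lemma phi_cellVW t :
  phi ex D a b g f m t = \sum_v \sum_w phi_cell (fun h => h t) v w.
Proof.
set v0 := Vr D t; set w0 := Wr D t; set ne : R := (~~ Er D t)%:R.
pose S v := ((Ar D t == true) && Er D t)%:R * (Yr D t - mu ex D true v) / Defs.pi ex D true v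
  - ((Ar D t == false) && Er D t)%:R * (Yr D t - mu ex D false v) / Defs.pi ex D false v.
have fiber v w : phi_cell (fun h => h t) v w = (v0 == v)%:R *
    (g v w * f v w * S v
     - ne / rho0 ex D v * ((b - a) * (g v w * f v w * nu ex D v w)
                            - g v w * f v w * tauL ex D a b v w * nu ex D v w)
     + (w0 == w)%:R * (ne / rho0 ex D v * target_coef v w + Mintegrand v w)).
  rewrite /phi_cell /= /cellA /cellVW0 /cellV0 /cellVW /target_coef /S -/v0 -/w0 /ne.
  rewrite !natr_andb; ring.
under eq_bigr => v _ do [under eq_bigr => w _ do rewrite fiber; rewrite -mulr_sumr].
rewrite sum_natr_eq_mul big_split /= sum_natr_eq_mul sumrB -mulr_suml -mulr_sumr.
rewrite sumrB -mulr_sumr /phi -/v0 -/w0 /S /target_coef /Mintegrand /ne.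
by case: (Er D t); case: (Ar D t); rewrite /=; ring.
Qed.

End CellExpansion.

Definition data_measurable (R : realType) d (T : measurableType d) (Vt Wt : finType)
    (D : data R T Vt Wt) :=
  [/\ forall v, measurable (Vr D @^-1` [set v]),
      forall w, measurable (Wr D @^-1` [set w]),
      forall e, measurable (Er D @^-1` [set e]),
      forall a', measurable (Ar D @^-1` [set a']) &
      bounded_measurable (Yr D)].

Section MeasurableData.
Context (R : realType) d (T : measurableType d) (Vt Wt : finType) (D : data R T Vt Wt).
Hypothesis mD : data_measurable D.

Let mV v : measurable [set t | Vr D t == v].
Proof. by case: mD => mV _ _ _ _; exact: measurable_eqb. Qed.
Let mW w : measurable [set t | Wr D t == w].
Proof. by case: mD => _ mW _ _ _; exact: measurable_eqb. Qed.
Let mA a' : measurable [set t | Ar D t == a'].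
Proof. by case: mD => _ _ _ mA _; exact: measurable_eqb. Qed.
Let mE1 : measurable [set t | Er D t].
Proof. by case: mD => _ _ mE _ _; exact: measurable_setb. Qed.
Let mE0 : measurable [set t | ~~ Er D t].
Proof. by case: mD => _ _ mE _ _; exact: measurable_setNb. Qed.

#[local] Hint Resolve mV mW mA mE1 mE0 measurable_andb : core.

Lemma bounded_measurable_cellA v a' : bounded_measurable (cellA D v a').
Proof. by apply: bounded_measurable_natr; auto. Qed.

Lemma bounded_measurable_cellV v : bounded_measurable (cellV D v).
Proof. by apply: bounded_measurable_natr; auto. Qed.

Lemma bounded_measurable_cellV0 v : bounded_measurable (cellV0 D v).
Proof. by apply: bounded_measurable_natr; auto. Qed.

Lemma bounded_measurable_cellV1 v : bounded_measurable (cellV1 D v).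
Proof. by apply: bounded_measurable_natr; auto. Qed.

Lemma bounded_measurable_cellVW v w : bounded_measurable (cellVW D v w).
Proof. by apply: bounded_measurable_natr; auto. Qed.

Lemma bounded_measurable_cellVW0 v w : bounded_measurable (cellVW0 D v w).
Proof. by apply: bounded_measurable_natr; auto. Qed.

Lemma bounded_measurable_cellVW1 v w : bounded_measurable (cellVW1 D v w).
Proof. by apply: bounded_measurable_natr; auto. Qed.

Let bY : bounded_measurable (Yr D). Proof. by case: mD. Qed.

#[local] Hint Resolve bY bounded_measurable_cellA bounded_measurable_cellV
  bounded_measurable_cellV0 bounded_measurable_cellV1 bounded_measurable_cellVW
  bounded_measurable_cellVW0 bounded_measurable_cellVW1 bounded_measurable_sum : core.

Section CellMasses.
Variables (P : probability T R) (v : Vt).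
Hypotheses (hA : forall a', 0 < Ex P (cellA D v a')) (hV0 : 0 < Ex P (cellV0 D v)).

Let Ex_cellV1 : Ex P (cellV1 D v) = Ex P (cellA D v true) + Ex P (cellA D v false).
Proof. by rewrite -ExD //; congr Ex; apply/funext => t; exact: cellV1_split. Qed.

Let Ex_cellV : Ex P (cellV D v) = Ex P (cellV1 D v) + Ex P (cellV0 D v).
Proof. by rewrite -ExD //; congr Ex; apply/funext => t; exact: cellV_split. Qed.

Let Ex_cellV1_gt0 : 0 < Ex P (cellV1 D v).
Proof. by rewrite Ex_cellV1 addr_gt0. Qed.

Lemma Ex_cellV_gt0 : 0 < Ex P (cellV D v).
Proof. by rewrite Ex_cellV addr_gt0. Qed.

Lemma Ex_cellVW_nu w :
  Ex P (cellVW1 D v w) / Ex P (cellV1 D v) = nu (Ex P) D v w ->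
  Ex P (cellVW D v w) = nu (Ex P) D v w * Ex P (cellV D v).
Proof.
move=> hW1; rewrite Ex_cellV mulrDr.
rewrite (_ : Ex P (cellVW D v w) = Ex P (cellVW1 D v w) + Ex P (cellVW0 D v w)); last first.
  by rewrite -ExD //; congr Ex; apply/funext => t; exact: cellVW_split.
congr (_ + _); first by rewrite -hW1 divfK // gt_eqF.
by rewrite /nu divfK // gt_eqF.
Qed.

End CellMasses.

Variables (ex : (T -> R) -> R) (a b : R) (g f m : Vt -> Wt -> R).

Lemma bounded_measurable_phi_cell v w :
  bounded_measurable (fun t => phi_cell D ex a b g f m (fun h => h t) v w).
Proof. by rewrite /phi_cell /=; auto 10. Qed.

#[local] Hint Resolve bounded_measurable_phi_cell : core.

Lemma Ex_phi_cell (X : probability T R) v w :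
  Ex X (fun t => phi_cell D ex a b g f m (fun h => h t) v w)
  = phi_cell D ex a b g f m (Ex X) v w.
Proof. by rewrite /phi_cell /= !(ExD, ExN, ExZ) //; auto 10. Qed.

Lemma Ex_phi (X : probability T R) :
  Ex X (phi ex D a b g f m) = \sum_v \sum_w phi_cell D ex a b g f m (Ex X) v w.
Proof.
rewrite (funext (phi_cellVW D ex a b g f m)) Ex_sum; last by auto.
apply: eq_bigr => v _; rewrite Ex_sum; last by auto.
by under eq_bigr do rewrite Ex_phi_cell.
Qed.

Lemma Ex_cellVW_sum (X : probability T R) (G : Vt -> Wt -> R) :
  Ex X (fun t => \sum_v \sum_w G v w * cellVW D v w t)
  = \sum_v \sum_w G v w * Ex X (cellVW D v w).
Proof.
rewrite Ex_sum; last by auto.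
apply: eq_bigr => v _; rewrite Ex_sum; last by auto.
by under eq_bigr do rewrite ExZ //.
Qed.

Lemma Mfun_mixEx (P Q : probability T R) t :
  Mfun (mixEx P Q t) D a b g f m = \sum_v \sum_w
    Mintegrand D (mixEx P Q t) a b g f m v w * mixEx P Q t (cellVW D v w).
Proof.
rewrite Mfun_cellVW {1}/mixEx !Ex_cellVW_sum 2!mulr_sumr -big_split.
apply: eq_bigr => v _; rewrite 2!mulr_sumr -big_split.
apply: eq_bigr => w _ /=.
by rewrite [mixEx P Q t (cellVW D v w)]/mixEx; ring.
Qed.

End MeasurableData.

Section DerivativeRules.
Context (R : realType) (x : R).

Lemma is_derive_congr (u w : R -> R) du dw :
  is_derive x 1 u du -> u = w -> du = dw -> is_derive x 1 w dw.
Proof. by move=> ? <- <-. Qed.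

Lemma is_derive_const (c : R) : is_derive x 1 (fun _ : R => c) 0.
Proof. exact: is_derive_cst. Qed.

Lemma is_derive_add (u w : R -> R) du dw :
  is_derive x 1 u du -> is_derive x 1 w dw ->
  is_derive x 1 (fun t => u t + w t) (du + dw).
Proof. exact: is_deriveD. Qed.

Lemma is_derive_sub (u w : R -> R) du dw :
  is_derive x 1 u du -> is_derive x 1 w dw ->
  is_derive x 1 (fun t => u t - w t) (du - dw).
Proof. exact: is_deriveB. Qed.

Lemma is_derive_mul (u w : R -> R) du dw :
  is_derive x 1 u du -> is_derive x 1 w dw ->
  is_derive x 1 (fun t => u t * w t) (u x * dw + w x * du).
Proof. exact: is_deriveM. Qed.

Lemma is_derive_inv (u : R -> R) du :
  is_derive x 1 u du -> u x != 0 ->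
  is_derive x 1 (fun t => (u t)^-1) (- (u x) ^- 2 * du).
Proof. by move=> ? ?; exact: is_deriveV. Qed.

Lemma is_derive_sumr (I : finType) (u : I -> R -> R) (du : I -> R) :
  (forall i, is_derive x 1 (u i) (du i)) ->
  is_derive x 1 (fun t => \sum_(i : I) u i t) (\sum_(i : I) du i).
Proof.
move=> hu; elim: (index_enum I) => [|i r IH].
  apply: is_derive_congr (is_derive_const 0) _ _; last by rewrite big_nil.
  by apply/funext => t; rewrite big_nil.
apply: is_derive_congr (is_derive_add (hu i) IH) _ _; last by rewrite big_cons.
by apply/funext => t; rewrite big_cons.
Qed.

Lemma is_derive_affine (p q : R) :
  is_derive x 1 (fun t => (1 - t) * p + t * q) (q - p).
Proof.
have hid : is_derive x 1 (fun t : R => t) 1 := is_derive_id x 1.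
apply: is_derive_congr (is_derive_add
  (is_derive_mul (is_derive_sub (is_derive_const 1) hid) (is_derive_const p))
  (is_derive_mul hid (is_derive_const q))) _ _ => //.
by ring.
Qed.

End DerivativeRules.

Lemma cvg_diff_quotient_right (R : realType) (F : R -> R) (L c : R) :
  is_derive (0 : R) 1 F L -> F 0 = c -> (fun t => (F t - c) / t) @ 0^'+ --> L.
Proof.
move=> [dF <-] <-.
have quot : (fun t => (F t - F 0) / t) @ 0^' --> 'D_1 F 0.
  rewrite (_ : (fun t => _) = (fun h => h^-1 *: ((F \o shift 0) (h *: 1) - F 0))).
    exact: dF.
  by apply/funext => h /=; rewrite addr0 [h *: 1]mulr1 mulrC.
move=> A /quot; apply: (@within_subset R (fun u : R => 0 < u) (fun u => u != 0)).
by move=> u /= /gt_eqF ->.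
Qed.

Section MixtureDerivatives.
Context d (T : measurableType d) (R : realType) (P Q : probability T R).

Lemma mixEx0 : mixEx P Q 0 = Ex P.
Proof. by apply/funext => h; rewrite /mixEx subr0 mul1r mul0r addr0. Qed.

Definition dEx (h : T -> R) := Ex Q h - Ex P h.

Lemma is_derive_mixEx h : is_derive (0 : R) 1 (fun t => mixEx P Q t h) (dEx h).
Proof. exact: is_derive_affine. Qed.

Definition ratio_deriv h1 h2 := (dEx h1 - Ex P h1 / Ex P h2 * dEx h2) / Ex P h2.

Lemma is_derive_mixEx_ratio h1 h2 : Ex P h2 != 0 ->
  is_derive (0 : R) 1 (fun t => mixEx P Q t h1 / mixEx P Q t h2) (ratio_deriv h1 h2).
Proof.
move=> h2P; have h2mix : mixEx P Q 0 h2 != 0 by rewrite mixEx0.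
apply: is_derive_congr
  (is_derive_mul (is_derive_mixEx h1) (is_derive_inv (is_derive_mixEx h2) h2mix)) _ _ => //.
by rewrite /= mixEx0 /ratio_deriv; field.
Qed.

Variables (Vt Wt : finType) (D : data R T Vt Wt) (a b : R) (g f m : Vt -> Wt -> R).

Definition tauL_deriv v w :=
  (ratio_deriv (fun t => Yr D t * cellA D v true t) (cellA D v true)
   - ratio_deriv (fun t => Yr D t * cellA D v false t) (cellA D v false)
   + ((b - a) - tauL (Ex P) D a b v w) * ratio_deriv (cellVW0 D v w) (cellV0 D v))
  / nu (Ex P) D v w.

Hypotheses (hA : forall v a', Ex P (cellA D v a') != 0)
  (hV0 : forall v, Ex P (cellV0 D v) != 0) (hnu : forall v w, nu (Ex P) D v w != 0).

Lemma is_derive_tauL_mixEx v w :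
  is_derive (0 : R) 1 (fun t => tauL (mixEx P Q t) D a b v w) (tauL_deriv v w).
Proof.
have dmu1 := is_derive_mixEx_ratio (fun t => Yr D t * cellA D v true t) (hA v true).
have dmu0 := is_derive_mixEx_ratio (fun t => Yr D t * cellA D v false t) (hA v false).
have dnu := is_derive_mixEx_ratio (cellVW0 D v w) (hV0 v).
have nu0 : mixEx P Q 0 (cellVW0 D v w) / mixEx P Q 0 (cellV0 D v) != 0.
  by rewrite mixEx0; exact: hnu.
apply: is_derive_congr (is_derive_mul (is_derive_sub (is_derive_sub dmu1 dmu0)
    (is_derive_mul (is_derive_const _ (b - a)) (is_derive_sub (is_derive_const _ 1) dnu)))
  (is_derive_inv dnu nu0)) _ _ => //.
rewrite /= !mixEx0 /tauL_deriv /tauL.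
rewrite -/(mu (Ex P) D true v) -/(mu (Ex P) D false v) -/(nu (Ex P) D v w).
by field; exact: hnu.
Qed.

Lemma is_derive_Mintegrand_mixEx v w :
  is_derive (0 : R) 1 (fun t => Mintegrand D (mixEx P Q t) a b g f m v w)
    (g v w * (tauL_deriv v w * f v w)).
Proof.
have cst := @is_derive_const R 0.
apply: is_derive_congr (is_derive_mul (cst (g v w))
  (is_derive_sub (is_derive_sub (is_derive_add (is_derive_add
    (is_derive_mul (is_derive_tauL_mixEx v w) (cst (f v w))) (cst ((b - a) * f v w)))
   (cst a)) (cst b)) (cst (m v w)))) _ _ => //=.
by ring.
Qed.

Lemma is_derive_Mfun_cells :
  is_derive (0 : R) 1 (fun t => \sum_v \sum_w
      Mintegrand D (mixEx P Q t) a b g f m v w * mixEx P Q t (cellVW D v w))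
    (\sum_v \sum_w (Mintegrand D (Ex P) a b g f m v w * dEx (cellVW D v w)
                    + Ex P (cellVW D v w) * (g v w * (tauL_deriv v w * f v w)))).
Proof.
apply: is_derive_sumr => v; apply: is_derive_sumr => w.
apply: is_derive_congr (is_derive_mul (is_derive_Mintegrand_mixEx v w)
  (is_derive_mixEx (cellVW D v w))) _ _ => //.
by rewrite mixEx0.
Qed.

Lemma Mintegrand_deriv_phi_cell v w :
  Ex P (cellV D v) != 0 ->
  Ex P (cellVW D v w) = nu (Ex P) D v w * Ex P (cellV D v) ->
  Mintegrand D (Ex P) a b g f m v w * dEx (cellVW D v w)
    + Ex P (cellVW D v w) * (g v w * (tauL_deriv v w * f v w))
  = phi_cell D (Ex P) a b g f m dEx v w.
Proof.
move=> hV ->.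
have /andP[hVW0 _] : (Ex P (cellVW0 D v w) != 0) && ((Ex P (cellV0 D v))^-1 != 0).
  by rewrite -negb_or -mulf_eq0 hnu.
rewrite /phi_cell /tauL_deriv /ratio_deriv /target_coef /tauL /mu /nu /Defs.pi /rho0.
by field; rewrite hV hVW0 hV0 !hA.
Qed.

End MixtureDerivatives.

Lemma ler_norm_between (S : realDomainType) (a b x : S) :
  a <= x <= b -> `|x| <= `|a| + `|b|.
Proof.
case/andP=> ax xb; rewrite ler_norml.
have := ler_norm b; have := ler_norm (- a); rewrite normrN => ? ?.
have := normr_ge0 a; have := normr_ge0 b => ? ?.
by apply/andP; split; lra.
Qed.

Theorem theorem2 (R : realType) (d : measure_display) (T : measurableType d)
  (Vt Wt : finType) (p : nat) (D : data R T Vt Wt) (a b : R)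
  (h : Vt -> Wt -> R) (mm : 'rV[R]_p -> Vt -> Wt -> R) (beta : 'rV[R]_p)
  (P : probability T R) :
  (forall v, measurable (Vr D @^-1` [set v])) ->
  (forall w, measurable (Wr D @^-1` [set w])) ->
  (forall e, measurable (Er D @^-1` [set e])) ->
  (forall a', measurable (Ar D @^-1` [set a'])) ->
  measurable_fun setT (Yr D) ->
  (forall t, a <= Yr D t <= b) ->
  (forall v a', 0 < Ex P (cellA D v a')) ->
  (forall v, 0 < Ex P (cellV0 D v)) ->
  (forall v w, 0 < nu (Ex P) D v w) ->
  (* P(W = w | V = v, E = 1) = P(W = w | V = v, E = 0) *)
  (forall v w, Ex P (cellVW1 D v w) / Ex P (cellV1 D v) = nu (Ex P) D v w) ->
  let f := findic (Ex P) D a b in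
  forall (Q : probability T R) (i : 'I_p),
    let g := gcomp h mm beta i in
    (fun t => (Mfun (mixEx P Q t) D a b g f (fun v w => mm beta v w)
               - Mfun (Ex P) D a b g f (fun v w => mm beta v w)) / t)
      @ 0^'+ -->
    Ex Q (phi (Ex P) D a b g f (fun v w => mm beta v w))
      - Ex P (phi (Ex P) D a b g f (fun v w => mm beta v w)).
Proof.
move=> mV mW mE mA mY hY hA hV0 hnu hW1 f Q i g; set m := fun v w => mm beta v w.
have mD : data_measurable D.
  by split=> //; split=> //; exists (`|a| + `|b|) => t; exact: ler_norm_between.
have hA0 v a' := lt0r_neq0 (hA v a'); have hV00 v := lt0r_neq0 (hV0 v).
have hnu0 v w := lt0r_neq0 (hnu v w).
apply: cvg_diff_quotient_right; last by rewrite mixEx0.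
apply: is_derive_congr (is_derive_Mfun_cells Q a b g f m hA0 hV00 hnu0) _ _.
  by apply/funext => t; rewrite Mfun_mixEx.
rewrite !Ex_phi // -sumrB; apply: eq_bigr => v _; rewrite -sumrB; apply: eq_bigr => w _.
rewrite phi_cellB Mintegrand_deriv_phi_cell ?lt0r_neq0 ?Ex_cellV_gt0 //.
exact: Ex_cellVW_nu.
Qed.
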